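(* Let $K$ be an imaginary quadratic field, let $f\ge1$, and let $A=\mathbb{C}/\mathcal{O}_f\times\mathbb{C}/\mathfrak{a}$, where $\mathfrak{a}\subset K$ is a lattice whose conductor divides $f$. If $F\subset A$ is an elliptic curve, then the conductor of $F$ divides $f$.
   Context: $\mathcal{O}_m=\mathbb{Z}+m\mathcal{O}_K$. A lattice in $K$ is a free abelian subgroup of rank 2; its conductor is the $m$ with $\{\alpha\in K:\alpha\mathfrak{a}\subset\mathfrak{a}\}=\mathcal{O}_m$. An elliptic curve $F\subset A$ has CM by $K$, so $F\cong\mathbb{C}/\mathfrak{b}$ for a lattice $\mathfrak{b}\subset K$, and its conductor is that of $\mathfrak{b}$. *)

From HB Require Import structures.
From mathcomp Require Import all_boot all_order all_algebra.
From mathcomp Require Import reals.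
From mathcomp.real_closed Require Import complex.
Set Implicit Arguments. Unset Strict Implicit. Unset Printing Implicit Defensive.
Import Order.TTheory GRing.Theory Num.Theory.
Local Open Scope ring_scope.

(* Subsets of C are predicates C -> Prop.  C is an arbitrary
   algebraically closed numeric field; in the theorem it is instantiated
   with the complex numbers R[i] over a model R of the reals. *)
Section CMDefs.
Variable C : numClosedFieldType.

Definition alg_int (x : C) : Prop :=
  exists p : {poly int}, p \is monic /\ root (map_poly intr p) x.

Definition imag_quad_gen (omega : C) : Prop :=
  (exists r : rat, omega ^+ 2 = ratr r) /\ omega \notin Num.real.

Definition Kfield (omega : C) (x : C) : Prop :=
  exists p q : rat, x = ratr p + ratr q * omega.

Definition OK (omega : C) (x : C) : Prop := Kfield omega x /\ alg_int x.

Definition order_of (omega : C) (m : nat) (x : C) : Prop :=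
  exists (n : int) (y : C), OK omega y /\ x = n%:~R + m%:R * y.

Definition Zspan (e1 e2 : C) (x : C) : Prop :=
  exists a b : int, x = a%:~R * e1 + b%:~R * e2.

Definition lattice_in_K (omega : C) (L : C -> Prop) : Prop :=
  exists e1 e2 : C, Kfield omega e1 /\ Kfield omega e2 /\
    (forall a b : int, a%:~R * e1 + b%:~R * e2 = 0 -> a = 0 /\ b = 0) /\
    (forall x, L x <-> Zspan e1 e2 x).

Definition lattice_in_C (L : C -> Prop) : Prop :=
  exists e1 e2 : C,
    (forall a b : C, a \is Num.real -> b \is Num.real ->
       a * e1 + b * e2 = 0 -> a = 0 /\ b = 0) /\
    (forall x, L x <-> Zspan e1 e2 x).

Definition multiplier (L : C -> Prop) (alpha : C) : Prop :=
  forall x, L x -> L (alpha * x).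

Definition has_conductor (omega : C) (L : C -> Prop) (m : nat) : Prop :=
  (0 < m)%N /\ forall alpha, multiplier L alpha <-> order_of omega m alpha.

(* The abelian surface A = C^2 / (L1 x L2).  An elliptic curve F ⊂ A is a
   one-dimensional complex subtorus: F = W / (W ∩ (L1 x L2)) for a complex
   line W = C w (w != 0) such that W ∩ (L1 x L2) is a lattice in W.
   Identifying W with C via t |-> t w, F ≅ C / curve_lattice L1 L2 w. *)
Definition curve_lattice (L1 L2 : C -> Prop) (w : C * C) (t : C) : Prop :=
  L1 (t * w.1) /\ L2 (t * w.2).

Definition elliptic_curve_in (L1 L2 : C -> Prop) (w : C * C) : Prop :=
  w != (0, 0) /\ lattice_in_C (curve_lattice L1 L2 w).

End CMDefs.

From HB Require Import structures.
From mathcomp Require Import all_boot all_order all_algebra.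
From mathcomp Require Import reals.
From mathcomp.real_closed Require Import complex.
From mathcomp Require Import ring.
From Stdlib Require Import Classical Wf_nat.
Set Implicit Arguments. Unset Strict Implicit. Unset Printing Implicit Defensive.
Import Order.TTheory GRing.Theory Num.Theory.
Local Open Scope ring_scope.

(* The multiplier ring M of the lattice of F stabilises a rank-two Z-module, so
   its elements are algebraic integers (eigenvalues of integer matrices); as M
   also contains the non-rational element f*theta of K, it lies in K, hence in
   O_K = Z + Z theta.  Conversely O_f stabilises O_f, and it stabilises a
   because m | f gives O_f <= O_m; so O_f <= M.  The d with d*theta in M form
   a subgroup kZ of Z containing f, whence M = Z + kZ theta = O_k and k | f. *)

Local Notation pZtoQ := (map_poly (intr : int -> rat)).

Lemma rat_integral_int (x : rat) : integralOver intr x -> x \is a Num.int.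
Proof.
move=> [P monP rootPx].
(* Gauss's lemma: X - x is a rational multiple of an integer factor of P. *)
have /dvdpP_rat_int[p1 [a _ Dp1] [q DP]] : 'X - x%:P %| pZtoQ P by rewrite dvdp_XsubCl.
have unit_lc_p1 : lead_coef p1 \is a GRing.unit.
  by apply/unitrPr; exists (lead_coef q); rewrite -lead_coefM -DP; apply/monicP.
have a_lc_p1 : a * (lead_coef p1)%:~R = 1.
  by move/monicP: (monicXsubC x); rewrite Dp1 lead_coefZ lead_coef_map_inj //; exact: intr_inj.
have -> : x = - ('X - x%:P)`_0 by rewrite coefB coefX coefC opprB subr0.
rewrite Dp1 coefZ coef_map /= rpredN rpredM ?intr_int //.
have lc_lcV : (lead_coef p1)%:~R * ((lead_coef p1)^-1)%:~R = 1 :> rat.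
  by rewrite -intrM mulrV.
by rewrite -[a]mulr1 -lc_lcV mulrA a_lc_p1 mul1r intr_int.
Qed.

Lemma integral_sqrt (R : comNzRingType) (x : R) (c : int) :
  x ^+ 2 = c%:~R -> integralOver intr x.
Proof.
move=> x2c; exists ('X^2 - c%:P); first exact: monicXnsubC.
by rewrite /root rmorphB /= map_polyXn map_polyC !hornerE x2c subrr.
Qed.

Lemma rat_sqr_int (q : rat) : q ^+ 2 \is a Num.int -> q \is a Num.int.
Proof. by move=> /intrP[c q2c]; apply/rat_integral_int/(integral_sqrt q2c). Qed.

Lemma eigenvalue_integral (F : fieldType) n (X : 'M[int]_n) (v : 'rV[F]_n) a :
  v != 0 -> v *m map_mx intr X = a *: v -> integralOver intr a.
Proof.
move=> v_neq0 vXa; exists (char_poly X); first exact: char_poly_monic.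
rewrite map_char_poly -eigenvalue_root_char.
by apply/eigenvalueP; exists v.
Qed.

Lemma int_subgroup_dvdz (P : int -> Prop) (n0 : int) :
  n0 != 0 -> P n0 -> (forall x y, P x -> P y -> P (x - y)) ->
  (forall z x, P x -> P (z * x)) ->
  exists2 k : nat, (0 < k)%N & forall x, P x <-> (k %| x)%Z.
Proof.
move=> n0_neq0 Pn0 Psub Pscale.
pose Q k := (0 < k)%N /\ P k%:Z.
have [k [[[k_gt0 Pk] k_min] _]] : has_unique_least_element le Q.
  apply: dec_inh_nat_subset_has_unique_least_element => [k|]; first exact: classic.
  by exists `|n0|%N; split; [rewrite absz_gt0 | rewrite abszEsg; apply: Pscale].
exists k => // x; split => [Px | /dvdzP[q ->]]; last exact: Pscale.
have k_neq0 : k%:Z != 0 by rewrite eqz_nat -lt0n.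
have mod_ge0 := modz_ge0 x k_neq0.
have Pmod : P (x %% k)%Z.
  rewrite -[X in P X](addKr ((x %/ k)%Z * k)) addrC -divz_eq.
  exact: Psub Px (Pscale _ _ Pk).
apply/dvdz_mod0P/eqP; apply: contraT => mod_neq0.
have Qmod : Q `|(x %% k)%Z|%N by split; [rewrite absz_gt0 | rewrite gez0_abs].
move/ssrnat.leP: (k_min _ Qmod).
by rewrite leqNgt -ltz_nat gez0_abs // ltz_pmod ?ltz_nat.
Qed.

Section AlgebraicIntegers.
Variable C : numClosedFieldType.
Implicit Types x y : C.

Lemma alg_intP x : alg_int x <-> integralOver intr x.
Proof. by split=> [[P [monP rootP]] | [P monP rootP]]; exists P. Qed.

Lemma alg_int_add x y : alg_int x -> alg_int y -> alg_int (x + y).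
Proof. by move=> /alg_intP ix /alg_intP iy; apply/alg_intP/integral_add. Qed.

Lemma alg_int_sub x y : alg_int x -> alg_int y -> alg_int (x - y).
Proof. by move=> /alg_intP ix /alg_intP iy; apply/alg_intP/integral_sub. Qed.

Lemma alg_int_mul x y : alg_int x -> alg_int y -> alg_int (x * y).
Proof. by move=> /alg_intP ix /alg_intP iy; apply/alg_intP/integral_mul. Qed.

Lemma alg_int_intr (z : int) : alg_int (z%:~R : C).
Proof. exact/alg_intP/integral_id. Qed.

Lemma alg_int_conj x : alg_int x -> alg_int x^*.
Proof.
move=> [P [monP /(rmorph_root Num.conj_op)]]; exists P; split=> //.
suff <- : map_poly Num.conj_op (map_poly intr P) = map_poly intr P :> {poly C} by [].
by rewrite -map_poly_comp; apply: eq_map_poly => z /=; rewrite rmorph_int.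
Qed.

Lemma ratr_real (p : rat) : (ratr p : C) \is Num.real.
Proof. by rewrite realE ler0q lerq0 le_total. Qed.

Lemma conj_ratr (p : rat) : (ratr p : C)^* = ratr p.
Proof. exact: conj_Creal (ratr_real p). Qed.

Lemma ratr_alg_int (q : rat) : alg_int (ratr q : C) -> q \is a Num.int.
Proof.
move=> [P [monP]].
have -> : map_poly intr P = map_poly (ratr : rat -> C) (pZtoQ P).
  by rewrite -map_poly_comp; apply: eq_map_poly => z /=; rewrite ratr_int.
by rewrite fmorph_root => rootP; apply: rat_integral_int; exists P.
Qed.

End AlgebraicIntegers.

Section Lattice.
Variables (C : numClosedFieldType) (L : C -> Prop).
Hypothesis latL : lattice_in_C L.

Lemma lattice_basis :
  exists e1 e2 : C, e1 != 0 /\ forall x, L x <-> Zspan e1 e2 x.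
Proof.
have [e1 [e2 [indep spanL]]] := latL.
exists e1, e2; split=> //; apply/eqP => e1_0.
have [/eqP] := indep 1 0 (real1 _) (real0 _) ltac:(by rewrite e1_0 mulr0 mul0r addr0).
by rewrite oner_eq0.
Qed.

Lemma lattice_sub x y : L x -> L y -> L (x - y).
Proof.
have [e1 [e2 [_ spanL]]] := latL.
move=> /spanL[a1 [b1 ->]] /spanL[a2 [b2 ->]]; apply/spanL.
by exists (a1 - a2), (b1 - b2); ring.
Qed.

Lemma lattice_zmul z x : L x -> L (z%:~R * x).
Proof.
have [e1 [e2 [_ spanL]]] := latL.
move=> /spanL[a [b ->]]; apply/spanL.
by exists (z * a), (z * b); ring.
Qed.

Lemma multiplier_sub al be :
  multiplier L al -> multiplier L be -> multiplier L (al - be).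
Proof. by move=> Mal Mbe t Lt; rewrite mulrBl; apply: lattice_sub; auto. Qed.

Lemma multiplier_zmul z al : multiplier L al -> multiplier L (z%:~R * al).
Proof. by move=> Mal t Lt; rewrite -mulrA; apply/lattice_zmul/Mal. Qed.

Lemma multiplier_intr z : multiplier L z%:~R.
Proof. by move=> t; apply: lattice_zmul. Qed.

Lemma multiplier_add al be :
  multiplier L al -> multiplier L be -> multiplier L (al + be).
Proof.
move=> Mal Mbe; have := multiplier_sub Mal (multiplier_zmul (-1) Mbe).
by rewrite rmorphN1 mulN1r opprK.
Qed.

Lemma multiplier_alg_int al : multiplier L al -> alg_int al.
Proof.
have [e1 [e2 [e1_neq0 spanL]]] := lattice_basis.
have Le1 : L e1 by apply/spanL; exists 1, 0; rewrite mul1r mul0r addr0.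
have Le2 : L e2 by apply/spanL; exists 0, 1; rewrite mul1r mul0r add0r.
move=> Mal; have /spanL[x11 [x12 E1]] := Mal _ Le1.
have /spanL[x21 [x22 E2]] := Mal _ Le2.
(* al is an eigenvalue of the integer matrix of multiplication by al. *)
pose v : 'rV[C]_2 := \row_j [:: e1; e2]`_j.
pose X : 'M[int]_2 := \matrix_(i, j) (nth [::] [:: [:: x11; x21]; [:: x12; x22]] i)`_j.
apply/alg_intP/(@eigenvalue_integral _ _ X v).
  by apply/eqP => /rowP/(_ 0); rewrite !mxE; apply/eqP.
apply/rowP => j; rewrite !mxE big_ord_recl big_ord1 !mxE.
by case: j => [[|[|]]] //= _; rewrite ?E1 ?E2 /=; ring.
Qed.

End Lattice.

Lemma multiplier_curve_lattice (C : numClosedFieldType) (L1 L2 : C -> Prop) w al :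
  multiplier L1 al -> multiplier L2 al -> multiplier (curve_lattice L1 L2 w) al.
Proof. by move=> M1 M2 t [L1t L2t]; split; rewrite -mulrA; [apply: M1 | apply: M2]. Qed.

Section QuadraticField.
Variables (C : numClosedFieldType) (omega : C) (r : rat).
Hypothesis omega2 : omega ^+ 2 = ratr r.
Hypothesis omega_nreal : omega \notin Num.real.

Definition Kq p q : C := ratr p + ratr q * omega.

Lemma Kq_eq0 p q : Kq p q = 0 -> p = 0 /\ q = 0.
Proof.
move=> Kpq0; have [q0 | q_neq0] := eqVneq q 0.
  by move: Kpq0; rewrite /Kq q0 rmorph0 mul0r addr0 => /eqP; rewrite fmorph_eq0 => /eqP.
case/negP: omega_nreal.
have q_omega : ratr q * omega = - ratr p by apply/eqP; rewrite -addr_eq0 addrC -/(Kq p q) Kpq0.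
have -> : omega = - ratr p / ratr q by rewrite -q_omega mulrC mulKf ?fmorph_eq0.
by rewrite rpredM ?rpredN ?rpredV ?ratr_real.
Qed.

Lemma KqB p q p' q' : Kq p q - Kq p' q' = Kq (p - p') (q - q').
Proof. by rewrite /Kq; ring. Qed.

Lemma KqM p q p' q' : Kq p q * Kq p' q' = Kq (p * p' + q * q' * r) (p * q' + q * p').
Proof. by rewrite /Kq !(rmorphD, rmorphM) /= -omega2; ring. Qed.

Lemma conj_omega : omega^* = - omega.
Proof.
have conj_omega2 : omega^* ^+ 2 = omega ^+ 2.
  by rewrite -(rmorphXn Num.conj_op) /= omega2 conj_Creal ?ratr_real.
have : (omega^* - omega) * (omega^* + omega) = 0 by rewrite -subr_sqr conj_omega2 subrr.
move/eqP; rewrite mulf_eq0 subr_eq0 -CrealE (negbTE omega_nreal) /= addr_eq0.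
by move/eqP.
Qed.

Lemma conj_Kq p q : (Kq p q)^* = Kq p (- q).
Proof.
have -> : (Kq p q)^* = (ratr p)^* + (ratr q)^* * omega^*.
  by rewrite rmorphD; congr (_ + _); exact: rmorphM.
by rewrite !conj_ratr conj_omega /Kq; ring.
Qed.

Lemma OK_add x y : OK omega x -> OK omega y -> OK omega (x + y).
Proof.
move=> [[p [q ->]] intx] [[p' [q' ->]] inty]; split; last exact: alg_int_add.
by exists (p + p'), (q + q'); ring.
Qed.

Lemma OK_sub x y : OK omega x -> OK omega y -> OK omega (x - y).
Proof.
move=> [[p [q ->]] intx] [[p' [q' ->]] inty]; split; last exact: alg_int_sub.
by exists (p - p'), (q - q'); exact: KqB.
Qed.

Lemma OK_mul x y : OK omega x -> OK omega y -> OK omega (x * y).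
Proof.
move=> [[p [q ->]] intx] [[p' [q' ->]] inty]; split; last exact: alg_int_mul.
by exists (p * p' + q * q' * r), (p * q' + q * p'); exact: KqM.
Qed.

Lemma OK_intr (z : int) : OK omega z%:~R.
Proof.
split; last exact: alg_int_intr.
by exists z%:~R, 0; rewrite ratr_int rmorph0 mul0r addr0.
Qed.

Lemma OK_ratr p : OK omega (ratr p) -> p \is a Num.int.
Proof. by move=> [_ /ratr_alg_int]. Qed.

Lemma OK_trace p q : OK omega (Kq p q) -> p *+ 2 \is a Num.int.
Proof.
move=> [_ intK]; apply: (@ratr_alg_int C).
have -> : ratr (p *+ 2) = Kq p q + (Kq p q)^*.
  by rewrite conj_Kq /Kq; ring.
exact: alg_int_add intK (alg_int_conj intK).
Qed.

Lemma OK_norm p q : OK omega (Kq p q) -> p ^+ 2 - q ^+ 2 * r \is a Num.int.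
Proof.
move=> [_ intK]; apply: (@ratr_alg_int C).
have -> : ratr (p ^+ 2 - q ^+ 2 * r) = Kq p q * (Kq p q)^*.
  transitivity (ratr p ^+ 2 - ratr q ^+ 2 * omega ^+ 2 : C); first by rewrite omega2; ring.
  by rewrite conj_Kq /Kq; ring.
exact: alg_int_mul intK (alg_int_conj intK).
Qed.

Lemma OK_discrete p q : OK omega (Kq p q) -> (2 * numq r)%:~R * q \is a Num.int.
Proof.
move=> OKpq; apply: rat_sqr_int.
have -> : ((2 * numq r)%:~R * q) ^+ 2 =
    ((p *+ 2) ^+ 2 - 4 * (p ^+ 2 - q ^+ 2 * r)) * (numq r * denq r)%:~R.
  by rewrite !intrM numqE; ring.
have trace_int := OK_trace OKpq; have norm_int := OK_norm OKpq.
by rewrite rpredM ?rpredB ?rpredX ?rpredM ?intr_int.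
Qed.

Lemma r_neq0 : r != 0.
Proof.
apply: contraNneq omega_nreal => r0.
have : omega ^+ 2 == 0 by rewrite omega2 r0 rmorph0.
by rewrite expf_eq0 /= => /eqP ->; exact: real0.
Qed.

Lemma Kq_sqr p q :
  Kq p q ^+ 2 = ratr (p *+ 2) * Kq p q - ratr (p ^+ 2 - q ^+ 2 * r).
Proof.
transitivity (ratr (p *+ 2) * Kq p q - (ratr p ^+ 2 - ratr q ^+ 2 * omega ^+ 2)).
  by rewrite /Kq; ring.
by rewrite omega2; ring.
Qed.

Lemma OK_omega_coord : exists2 q0, q0 != 0 &
  forall q, (exists p, OK omega (Kq p q)) <-> exists b : int, q = b%:~R * q0.
Proof.
(* The omega-coordinates of O_K lie in (1/N)Z; P n says that n/N is one. *)
pose N : int := 2 * numq r.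
have N_neq0 : (N%:~R : rat) != 0 by rewrite intr_eq0 mulf_neq0 ?numq_eq0 ?r_neq0.
pose P n := exists p, OK omega (Kq p (n%:~R / N%:~R)).
have Psub x y : P x -> P y -> P (x - y).
  move=> [p OKx] [p' OKy]; exists (p - p').
  by rewrite rmorphB mulrBl -KqB; exact: OK_sub.
have Pscale z x : P x -> P (z * x).
  move=> [p OKx]; exists (z%:~R * p).
  have -> : Kq (z%:~R * p) ((z * x)%:~R / N%:~R) = z%:~R * Kq p (x%:~R / N%:~R).
    by rewrite /Kq; ring.
  exact: OK_mul (OK_intr z) OKx.
have P_denq : P (N * denq r).
  exists 0; rewrite rmorphM /= mulrC mulKf //; split; first by exists 0, (denq r)%:~R.
  apply/alg_intP/(@integral_sqrt _ _ (denq r * numq r)).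
  transitivity ((denq r)%:~R ^+ 2 * omega ^+ 2 : C); first by rewrite /Kq; ring.
  by rewrite omega2 intrM -[(numq r)%:~R : C]ratr_int numqE; ring.
have Nd_neq0 : N * denq r != 0 by rewrite mulf_neq0 ?denq_neq0 -?(intr_eq0 rat).
have [k k_gt0 Pk] := int_subgroup_dvdz Nd_neq0 P_denq Psub Pscale.
exists (k%:~R / N%:~R); first by rewrite mulf_neq0 ?invr_eq0 // intr_eq0 eqz_nat -lt0n.
move=> q; split=> [[p OKpq] | [b ->]].
  have /intrP[n Nq] := OK_discrete OKpq.
  have q_n : q = n%:~R / N%:~R by rewrite -Nq mulrC mulKf.
  have /Pk/dvdzP[b n_bk] : P n by exists p; rewrite -q_n.
  by exists b; rewrite q_n n_bk rmorphM mulrA.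
have [p OKp] := (Pk (b * k)).2 (dvdz_mull _ (dvdzz _)).
by exists p; rewrite mulrA -rmorphM.
Qed.

Lemma OK_basis : exists (p0 q0 : rat) (u v : int),
  [/\ q0 != 0, Kq p0 q0 ^+ 2 = u%:~R + v%:~R * Kq p0 q0 &
      forall y, OK omega y <-> exists a b : int, y = a%:~R + b%:~R * Kq p0 q0].
Proof.
have [q0 q0_neq0 coordP] := OK_omega_coord.
have [p0 OKtheta] : exists p0, OK omega (Kq p0 q0) by apply/coordP; exists 1; rewrite mul1r.
have /intrP[v Ev] := OK_trace OKtheta.
have /intrP[n En] := OK_norm OKtheta.
exists p0, q0, (- n), v; split=> //.
  by rewrite Kq_sqr Ev En mulrNz !ratr_int addrC.
move=> y; split=> [OKy | [a [b ->]]]; last first.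
  exact: OK_add (OK_intr a) (OK_mul (OK_intr b) OKtheta).
have [[p [q Ey]] _] := OKy.
have /coordP[b q_b] : exists p, OK omega (Kq p q) by exists p; rewrite /Kq -Ey.
have /OK_ratr/intrP[a Ea] : OK omega (ratr (p - b%:~R * p0)).
  have -> : ratr (p - b%:~R * p0) = y - b%:~R * Kq p0 q0 by rewrite Ey q_b /Kq; ring.
  exact: OK_sub OKy (OK_mul (OK_intr b) OKtheta).
by exists a, b; rewrite Ey q_b -[p](subrK (b%:~R * p0)) Ea /Kq; ring.
Qed.

Lemma multiplier_Kfield (L : C -> Prop) p q al :
  lattice_in_C L -> q != 0 -> multiplier L (Kq p q) -> multiplier L al ->
  Kfield omega al.
Proof.
move=> latL q_neq0 Mbeta Mal.
have [e1 [e2 [e1_neq0 spanL]]] := lattice_basis latL.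
have Le1 : L e1 by apply/spanL; exists 1, 0; rewrite mul1r mul0r addr0.
have /spanL[y11 [y12 Ebeta]] := Mbeta _ Le1.
have /spanL[x11 [x12 Eal]] := Mal _ Le1.
have y12_neq0 : (y12%:~R : C) != 0.
  rewrite intr_eq0; apply: contraNneq q_neq0 => y12_0.
  have /eqP : (Kq p q - y11%:~R) * e1 = 0 by rewrite mulrBl Ebeta y12_0 mul0r addr0 subrr.
  rewrite mulf_eq0 (negbTE e1_neq0) orbF => /eqP beta_y11.
  have [_ ->] : p - y11%:~R = 0 /\ q = 0.
    by apply: Kq_eq0; rewrite -beta_y11 /Kq; ring.
  by [].
have e2E : e2 = (Kq p q - y11%:~R) * e1 / y12%:~R.
  by rewrite mulrBl Ebeta addrC addKr mulrC mulKf.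
exists (x11%:~R + x12%:~R * (p - y11%:~R) / y12%:~R), (x12%:~R * q / y12%:~R).
apply: (mulIf e1_neq0); rewrite Eal e2E /Kq.
by field; rewrite intr_eq0 -(intr_eq0 C).
Qed.

End QuadraticField.

Section Orders.
Variables (C : numClosedFieldType) (omega : C) (p0 q0 : rat) (u v : int).
Hypothesis omega_nreal : omega \notin Num.real.
Hypothesis q0_neq0 : q0 != 0.
Hypothesis theta2 : Kq omega p0 q0 ^+ 2 = u%:~R + v%:~R * Kq omega p0 q0.
Hypothesis OK_span :
  forall y, OK omega y <-> exists a b : int, y = a%:~R + b%:~R * Kq omega p0 q0.
Local Notation theta := (Kq omega p0 q0).

Lemma order_ofP k y :
  order_of omega k y <-> exists c d : int, y = c%:~R + k%:R * d%:~R * theta.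
Proof.
split=> [[n [y' [/OK_span[a [b ->]] ->]]] | [c [d ->]]].
  by exists (n + k%:Z * a), b; ring.
exists c, (d%:~R * theta); split; last by ring.
by apply/OK_span; exists 0, d; rewrite add0r.
Qed.

Lemma order_of_dvdn m k y :
  (m %| k)%N -> order_of omega k y -> order_of omega m y.
Proof.
move=> /dvdnP[e ->] /order_ofP[c [d ->]]; apply/order_ofP.
by exists c, (e%:Z * d); ring.
Qed.

Lemma multiplier_order k al : order_of omega k al -> multiplier (order_of omega k) al.
Proof.
move=> /order_ofP[c [d ->]] t /order_ofP[c' [d' ->]]; apply/order_ofP.
exists (c * c' + k%:Z ^+ 2 * d * d' * u), (c * d' + d * c' + k%:Z * d * d' * v).
have -> : (c%:~R + k%:R * d%:~R * theta) * (c'%:~R + k%:R * d'%:~R * theta) =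
    c%:~R * c'%:~R + k%:R * (c%:~R * d'%:~R + d%:~R * c'%:~R) * theta
    + k%:R ^+ 2 * d%:~R * d'%:~R * theta ^+ 2 by ring.
by rewrite theta2; ring.
Qed.

Lemma has_conductor_dvdn (L : C -> Prop) f :
  (0 < f)%N -> lattice_in_C L ->
  (forall al, order_of omega f al -> multiplier L al) ->
  exists m, has_conductor omega L m /\ (m %| f)%N.
Proof.
move=> f_gt0 latL O_f_mult.
pose P d := multiplier L (d%:~R * theta).
have Pf : P f by apply/O_f_mult/order_ofP; exists 0, 1; rewrite /=; ring.
have M_OK al : multiplier L al -> OK omega al.
  move=> Mal; split; last exact (multiplier_alg_int latL Mal).
  apply: (multiplier_Kfield omega_nreal (p := f%:R * p0) (q := f%:R * q0) latL) => //.
    by rewrite mulf_neq0 // pnatr_eq0 -lt0n.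
  by move: Pf; rewrite /P /Kq; congr multiplier; ring.
have Psub x y : P x -> P y -> P (x - y).
  move=> Px Py; have := multiplier_sub latL Px Py.
  by rewrite /P; congr multiplier; ring.
have Pscale z x : P x -> P (z * x).
  move=> Px; have := multiplier_zmul latL z Px.
  by rewrite /P; congr multiplier; ring.
have f_neq0 : f%:Z != 0 by rewrite eqz_nat -lt0n.
have [k k_gt0 Pk] := int_subgroup_dvdz f_neq0 Pf Psub Pscale.
exists k; split; last exact/(Pk f).1.
split=> // al; split=> [Mal | /order_ofP[c [d ->]]].
  have [c [d Eal]] := (OK_span al).1 (M_OK al Mal).
  have /Pk/dvdzP[e Ed] : P d.
    have := multiplier_sub latL Mal (multiplier_intr latL c).
    by rewrite /P Eal; congr multiplier; ring.
  by apply/order_ofP; exists c, e; rewrite Eal Ed; ring.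
have Pdk : P (d * k) by apply/Pk/dvdz_mull/dvdzz.
have := multiplier_add latL (multiplier_intr latL c) Pdk.
by congr multiplier; ring.
Qed.

End Orders.

Local Open Scope complex_scope.

Theorem lemma3p2 (R : realType) (omega : R[i]) (f : nat)
  (a : R[i] -> Prop) (w : R[i] * R[i]) :
  imag_quad_gen omega ->
  (0 < f)%N ->
  lattice_in_K omega a ->
  (exists m : nat, has_conductor omega a m /\ (m %| f)%N) ->
  elliptic_curve_in (order_of omega f) a w ->
  exists m : nat,
    has_conductor omega (curve_lattice (order_of omega f) a w) m /\ (m %| f)%N.
Proof.
move=> [[r omega2] omega_nreal] f_gt0 _ [m [[_ mult_a] m_dvd_f]] [_ latF].
have [p0 [q0 [u [v [q0_neq0 theta2 OK_span]]]]] := OK_basis omega2 omega_nreal.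
apply: (has_conductor_dvdn omega_nreal q0_neq0 OK_span f_gt0 latF) => al O_f_al.
apply: multiplier_curve_lattice; first exact: multiplier_order theta2 OK_span _ _ O_f_al.
exact/mult_a/(order_of_dvdn OK_span m_dvd_f).
Qed.
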